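(* Let the unit segment be fixed in the plane. A real number $r$ is RA-constructible if and only if $r$ can be obtained from $1$ by finitely many applications of the field operations $+,-,\times,\div$ (division by nonzero numbers), of $x\mapsto\sqrt{x}$ applied to previously obtained positive reals $x$, and of $x\mapsto\sin(\pi x)$ applied to previously obtained reals $x$. Likewise, a real number $r$ is RRA-constructible if and only if $r$ can be obtained from $1$ by finitely many applications of the field operations, of $x\mapsto\sqrt{x}$ applied to previously obtained positive reals $x$, and of $x\mapsto\frac{1}{\pi}\arcsin(x)$ applied to previously obtained reals $x$ with $|x|\le 1$.
   Context: Constructions take place in the Euclidean plane, starting from a segment declared to have length $1$ (it fixes Cartesian coordinates: the origin at one endpoint, the horizontal axis along the segment). The available tools are the straightedge (draw the line through two constructed points), the compass (draw the circle with a constructed center through a constructed point) and intersection of constructed lines/circles, together with one additional tool: - the right anglesector (RA): given two constructed segments of lengths $p,q$, it divides the right angle in the ratio $p:q$, i.e. produces the ray at angle $\frac{p}{q}\cdot\frac{\pi}{2}$ inside a given constructed right angle (for $p\le q$); - the reverse right anglesector (RRA): given a constructed acute angle $\theta$ inside a constructed right angle and a constructed segment, it divides that segment in the ratio $\theta:\frac{\pi}{2}$ (i.e. produces the point at fraction $\frac{2\theta}{\pi}$ of its length). A real number is RA-constructible (resp. RRA-constructible) if its absolute value is the length of a segment constructible from the unit segment with straightedge, compass and the RA (resp. RRA) tool. *)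

From Stdlib Require Import Reals List.
Open Scope R_scope.

(** Points of the Euclidean plane, in the Cartesian coordinates fixed by the
    unit segment: one endpoint is (0,0), the other is (1,0). *)
Definition point := (R * R)%type.

Definition padd (a b : point) : point := (fst a + fst b, snd a + snd b).
Definition psub (a b : point) : point := (fst a - fst b, snd a - snd b).
Definition pscale (t : R) (a : point) : point := (t * fst a, t * snd a).
Definition dot (a b : point) : R := fst a * fst b + snd a * snd b.
Definition norm (a : point) : R := sqrt (dot a a).
Definition dist (a b : point) : R := norm (psub b a).

(** Constructed curves: lines (straightedge), circles (compass) and rays
    (output of the right anglesector). *)
Inductive curve : Type :=
  | Line   (a b : point)
  | Circle (c p : point)
  | Ray    (o d : point).

Definition on_curve (k : curve) (z : point) : Prop :=
  match k with
  | Line a b   => exists t : R, z = padd a (pscale t (psub b a))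
  | Circle c p => dist c z = dist c p
  | Ray o d    => exists t : R, 0 <= t /\ z = padd o (pscale t d)
  end.

Inductive tool : Type := RA | RRA.

Definition right_angle (o p q : point) : Prop :=
  p <> o /\ q <> o /\ dot (psub p o) (psub q o) = 0.

Definition unit_dir (o p : point) : point := pscale (/ norm (psub p o)) (psub p o).

Definition RA_ray (o p q : point) (plen qlen : R) : curve :=
  let phi := (plen / qlen) * (PI / 2) in
  Ray o (padd (pscale (cos phi) (unit_dir o p)) (pscale (sin phi) (unit_dir o q))).

Definition inside_right_angle (o p q x : point) : Prop :=
  0 < dot (psub x o) (unit_dir o p) /\ 0 < dot (psub x o) (unit_dir o q).

(** The (acute) angle between the arm op and the ray ox, for x inside the
    right angle (o;p,q): its tangent is (coordinate along oq)/(coordinate along op). *)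
Definition angle_in_right_angle (o p q x : point) : R :=
  atan (dot (psub x o) (unit_dir o q) / dot (psub x o) (unit_dir o p)).

(** RRA: the point dividing segment [a,b] in ratio theta : pi/2, i.e. at
    fraction 2 theta / pi of its length from a. *)
Definition RRA_point (theta : R) (a b : point) : point :=
  padd a (pscale (2 * theta / PI) (psub b a)).

Inductive cpt (m : tool) : point -> Prop :=
  | cpt_O : cpt m (0, 0)
  | cpt_I : cpt m (1, 0)
  | cpt_inter : forall (k1 k2 : curve) (z : point),
      ccurve m k1 -> ccurve m k2 ->
      on_curve k1 z -> on_curve k2 z ->
      (* the two curves meet in finitely many points (genuine intersection) *)
      (exists l : list point, forall w, on_curve k1 w -> on_curve k2 w -> In w l) ->
      cpt m z
  | cpt_RRA : forall o p q x a b : point,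
      m = RRA ->
      cpt m o -> cpt m p -> cpt m q -> cpt m x -> cpt m a -> cpt m b ->
      right_angle o p q -> inside_right_angle o p q x ->
      cpt m (RRA_point (angle_in_right_angle o p q x) a b)
with ccurve (m : tool) : curve -> Prop :=
  | cc_line : forall a b : point,
      cpt m a -> cpt m b -> a <> b -> ccurve m (Line a b)
  | cc_circle : forall c p : point,
      cpt m c -> cpt m p -> ccurve m (Circle c p)
  | cc_RA : forall o p q a b c d : point,
      m = RA ->
      cpt m o -> cpt m p -> cpt m q ->
      cpt m a -> cpt m b -> cpt m c -> cpt m d ->
      right_angle o p q ->
      0 < dist c d -> dist a b <= dist c d ->
      ccurve m (RA_ray o p q (dist a b) (dist c d)).

Definition constructible (m : tool) (r : R) : Prop :=
  exists a b : point, cpt m a /\ cpt m b /\ Rabs r = dist a b.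

Definition RA_constructible (r : R) : Prop := constructible RA r.
Definition RRA_constructible (r : R) : Prop := constructible RRA r.

Inductive obtainable (f : R -> R) (dom : R -> Prop) : R -> Prop :=
  | ob_one : obtainable f dom 1
  | ob_add : forall x y, obtainable f dom x -> obtainable f dom y -> obtainable f dom (x + y)
  | ob_sub : forall x y, obtainable f dom x -> obtainable f dom y -> obtainable f dom (x - y)
  | ob_mul : forall x y, obtainable f dom x -> obtainable f dom y -> obtainable f dom (x * y)
  | ob_div : forall x y, obtainable f dom x -> obtainable f dom y -> y <> 0 ->
      obtainable f dom (x / y)
  | ob_sqrt : forall x, obtainable f dom x -> 0 < x -> obtainable f dom (sqrt x)
  | ob_fun : forall x, obtainable f dom x -> dom x -> obtainable f dom (f x).

Definition RA_obtainable : R -> Prop :=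
  obtainable (fun x => sin (PI * x)) (fun _ => True).
Definition RRA_obtainable : R -> Prop :=
  obtainable (fun x => asin x / PI) (fun x => Rabs x <= 1).

(* Forward direction: by induction on constructions, every constructible point has
   obtainable coordinates. Two meeting lines are solved by Cramer's rule, a line and a
   circle by the quadratic formula, and two circles meet on their radical axis; the
   finiteness of every used intersection rules out coinciding curves, whose common points
   need not be obtainable. The RA ray at angle th = (p/q) pi/2 has direction
   (cos th, sin th) = (sin (pi (p/2q + 1/2)), sin (pi p/2q)), and the RRA point divides
   the segment at 2 atan u / pi = 2 asin (u / sqrt (1 + u^2)) / pi.
   Backward direction: the classical ruler-and-compass constructions give field
   operations and square roots on the horizontal axis; the RA ray between the axes with
   ratio t gives sin (t pi/2), hence sin (pi x) after reducing x modulo 2; the RRA tool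
   applied to the point (sqrt (1 - x^2), x) gives asin x / pi. *)

From Stdlib Require Import Reals Lra Lia List FinFun ZArith.
(* Imported after [Reals], so that [Defs.dist] shadows the metric-space [dist]. *)
From Pilot Require Import Defs.
Open Scope R_scope.

Definition sqdist (a b : point) : R := dot (psub b a) (psub b a).
Definition cross (v w : point) : R := fst v * snd w - snd v * fst w.
Definition perp (v : point) : point := (- snd v, fst v).

Definition meet_finite (k1 k2 : curve) : Prop :=
  exists l : list point, forall w, on_curve k1 w -> on_curve k2 w -> In w l.

Ltac unfold_pt :=
  unfold sqdist, cross, perp, dot, padd, psub, pscale in *; simpl in *.

Lemma dot_self_ge0 v : 0 <= dot v v.
Proof. destruct v as [v1 v2]; unfold dot; simpl; nra. Qed.

Lemma sqdist_ge0 a b : 0 <= sqdist a b.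
Proof. apply dot_self_ge0. Qed.

Lemma dot_self_eq0 v : dot v v = 0 -> v = (0, 0).
Proof.
  destruct v as [v1 v2]; unfold dot; simpl; intro H.
  destruct (Rplus_sqr_eq_0 v1 v2 H) as [-> ->]; reflexivity.
Qed.

Lemma sqdist_eq0 a b : sqdist a b = 0 -> b = a.
Proof.
  intro H; apply dot_self_eq0 in H; destruct a, b; unfold_pt; injection H; intros.
  f_equal; lra.
Qed.

Lemma sqdist_neq0 a b : a <> b -> sqdist a b <> 0.
Proof. intros Hab H; apply Hab; symmetry; apply sqdist_eq0; exact H. Qed.

Lemma point_eq_dec (a b : point) : {a = b} + {a <> b}.
Proof. decide equality; apply Req_EM_T. Qed.

Lemma on_circle_sqdist c p z : on_curve (Circle c p) z <-> sqdist c z = sqdist c p.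
Proof.
  change (sqrt (sqdist c z) = sqrt (sqdist c p) <-> sqdist c z = sqdist c p).
  split; intro H.
  - apply sqrt_inj; auto using sqdist_ge0.
  - now rewrite H.
Qed.

Lemma dist_axis x : dist (0, 0) (x, 0) = Rabs x.
Proof.
  unfold dist, norm; unfold_pt.
  rewrite <- sqrt_Rsqr_abs; f_equal; unfold Rsqr; ring.
Qed.

Lemma line_meet_param a v b w t s :
  padd a (pscale t v) = padd b (pscale s w) -> cross v w <> 0 ->
  t = cross (psub b a) w / cross v w.
Proof.
  destruct a as [a1 a2], v as [v1 v2], b as [b1 b2], w as [w1 w2]; unfold_pt.
  intros E Hvw; injection E as E1 E2.
  replace b1 with (a1 + t * v1 - s * w1) by lra; replace b2 with (a2 + t * v2 - s * w2) by lra.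
  field; exact Hvw.
Qed.

Definition radical_base (c d : point) (R1 R2 : R) : point :=
  pscale ((R1 - R2 + dot d d - dot c c) / (2 * dot (psub d c) (psub d c))) (psub d c).

Lemma radical_axis c d R1 R2 z : c <> d -> sqdist c z = R1 -> sqdist d z = R2 ->
  exists t, z = padd (radical_base c d R1 R2) (pscale t (perp (psub d c))).
Proof.
  intros Hcd <- <-; pose proof (sqdist_neq0 _ _ Hcd) as HN.
  exists (cross (psub d c) z / dot (psub d c) (psub d c)).
  unfold radical_base; destruct c as [c1 c2], d as [d1 d2], z as [z1 z2]; unfold_pt.
  f_equal; field; exact HN.
Qed.

Lemma param_circle_roots a v c R0 t : dot v v <> 0 ->
  sqdist c (padd a (pscale t v)) = R0 ->
  let A := dot v v in let B := 2 * dot (psub a c) v in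
  let D := B * B - 4 * A * (sqdist c a - R0) in
  t = (sqrt D - B) / (2 * A) \/ t = (- sqrt D - B) / (2 * A).
Proof.
  intros Hv Ht A B D.
  assert (HD : D = Rsqr (2 * A * t + B)).
  { subst A B D R0; destruct a, v, c; unfold_pt; unfold Rsqr; ring. }
  rewrite HD, sqrt_Rsqr_abs; unfold Rabs; destruct (Rcase_abs (2 * A * t + B)).
  - right; field; exact Hv.
  - left; field; exact Hv.
Qed.

Lemma not_meet_finite k1 k2 (g : R -> point) d : 0 < d ->
  (forall e e', 0 < e <= d -> 0 < e' <= d -> g e = g e' -> e = e') ->
  (forall e, 0 < e <= d -> on_curve k1 (g e) /\ on_curve k2 (g e)) ->
  ~ meet_finite k1 k2.
Proof.
  intros Hd Hinj Hon [l Hl].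
  set (e := fun n : nat => d / (INR n + 1)).
  assert (He : forall n, 0 < e n <= d).
  { intro n; pose proof (pos_INR n); unfold e; split.
    - apply Rdiv_lt_0_compat; lra.
    - apply Rmult_le_reg_r with (INR n + 1); [lra|].
      field_simplify; [nra | lra]. }
  assert (Hh : Injective (fun n => g (e n))).
  { intros n n' E; apply Hinj in E; auto; unfold e in E.
    assert (INR n + 1 = INR n' + 1) by (apply Rinv_eq_reg, (Rmult_eq_reg_l d); [exact E | lra]).
    apply INR_eq; lra. }
  pose proof (NoDup_incl_length (l := map (fun n => g (e n)) (seq 0 (S (length l)))) (l' := l))
    as Hlen.
  rewrite length_map, length_seq in Hlen; apply (Nat.nle_succ_diag_l (length l)), Hlen.
  - apply Injective_map_NoDup; [exact Hh | apply seq_NoDup].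
  - intros w Hw; apply in_map_iff in Hw; destruct Hw as [n [<- _]].
    apply Hl; apply Hon, He.
Qed.

Lemma atan_asin u : atan u = asin (u / sqrt (1 + u²)).
Proof. rewrite <- sin_atan, asin_sin; [reflexivity | pose proof (atan_bound u); lra]. Qed.

Lemma padd_pscale_0 a t v : t = 0 \/ v = (0, 0) -> padd a (pscale t v) = a.
Proof. destruct a; intros [-> | ->]; unfold_pt; f_equal; ring. Qed.

Lemma translate_inj z v e e' : dot v v <> 0 ->
  padd z (pscale e v) = padd z (pscale e' v) -> e = e'.
Proof.
  destruct z as [z1 z2], v as [v1 v2]; unfold_pt; intros Hv E; injection E as E1 E2.
  assert (H : (e - e') * (v1 * v1 + v2 * v2) = 0).
  { replace ((e - e') * (v1 * v1 + v2 * v2))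
      with ((e * v1 - e' * v1) * v1 + (e * v2 - e' * v2) * v2) by ring.
    replace (e * v1) with (e' * v1) by lra; replace (e * v2) with (e' * v2) by lra; ring. }
  apply Rmult_integral in H; destruct H; [lra | contradiction].
Qed.

Lemma parallel_scale v w : cross v w = 0 -> dot w w <> 0 ->
  v = pscale (dot v w / dot w w) w.
Proof.
  destruct v as [v1 v2], w as [w1 w2]; unfold_pt; intros Hvw Hw.
  f_equal; field_simplify_eq; try exact Hw.
  - replace (v1 * w2 ^ 2) with (w2 * (v1 * w2)) by ring.
    replace (v1 * w2) with (v2 * w1) by lra; ring.
  - replace (v2 * w1 ^ 2) with (w1 * (v2 * w1)) by ring.
    replace (v2 * w1) with (v1 * w2) by lra; ring.
Qed.

Section Obtainable.
Variables (f : R -> R) (dom : R -> Prop).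
Notation Ob := (obtainable f dom).

Lemma ob_zero : Ob 0.
Proof. replace 0 with (1 - 1) by ring; apply ob_sub; apply ob_one. Qed.

Lemma ob_two : Ob 2.
Proof. replace 2 with (1 + 1) by ring; apply ob_add; apply ob_one. Qed.

Lemma ob_opp x : Ob x -> Ob (- x).
Proof. intro; replace (- x) with (0 - x) by ring; apply ob_sub; auto using ob_zero. Qed.

Lemma ob_inv x : Ob x -> x <> 0 -> Ob (/ x).
Proof. intros; replace (/ x) with (1 / x) by (field; auto); apply ob_div; auto using ob_one. Qed.

(* Stdlib's [sqrt] is [0] on nonpositive reals. *)
Lemma ob_sqrt_any x : Ob x -> Ob (sqrt x).
Proof.
  intro Hx; destruct (Rlt_or_le 0 x) as [Hpos | Hneg].
  - apply ob_sqrt; assumption.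
  - rewrite sqrt_neg_0 by assumption; apply ob_zero.
Qed.

Ltac ob_ring := repeat first [assumption | apply ob_one | apply ob_zero | apply ob_two
  | apply ob_add | apply ob_sub | apply ob_mul | apply ob_opp].

Definition ob_pt (z : point) : Prop := Ob (fst z) /\ Ob (snd z).

Lemma ob_pt_padd a b : ob_pt a -> ob_pt b -> ob_pt (padd a b).
Proof. intros [] []; split; simpl; ob_ring. Qed.

Lemma ob_pt_psub a b : ob_pt a -> ob_pt b -> ob_pt (psub a b).
Proof. intros [] []; split; simpl; ob_ring. Qed.

Lemma ob_pt_pscale t a : Ob t -> ob_pt a -> ob_pt (pscale t a).
Proof. intros ? []; split; simpl; ob_ring. Qed.

Lemma ob_pt_perp v : ob_pt v -> ob_pt (perp v).
Proof. intros []; split; simpl; ob_ring. Qed.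

Lemma ob_dot a b : ob_pt a -> ob_pt b -> Ob (dot a b).
Proof. intros [] []; unfold dot; ob_ring. Qed.

Lemma ob_cross a b : ob_pt a -> ob_pt b -> Ob (cross a b).
Proof. intros [] []; unfold cross; ob_ring. Qed.

Lemma ob_sqdist a b : ob_pt a -> ob_pt b -> Ob (sqdist a b).
Proof. intros; apply ob_dot; apply ob_pt_psub; assumption. Qed.

Lemma ob_dist a b : ob_pt a -> ob_pt b -> Ob (dist a b).
Proof. intros; apply ob_sqrt_any, ob_sqdist; assumption. Qed.

Lemma ob_pt_unit_dir o p : ob_pt o -> ob_pt p -> p <> o -> ob_pt (unit_dir o p).
Proof.
  intros Ho Hp Hpo; apply ob_pt_pscale; [|apply ob_pt_psub; assumption].
  apply ob_inv; [apply ob_sqrt_any, ob_dot; apply ob_pt_psub; assumption|].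
  intro H; apply sqrt_eq_0 in H; [apply (sqdist_neq0 o p); auto | apply dot_self_ge0].
Qed.

Lemma ob_pt_radical_base c d R1 R2 : ob_pt c -> ob_pt d -> Ob R1 -> Ob R2 -> c <> d ->
  ob_pt (radical_base c d R1 R2).
Proof.
  intros Hc Hd H1 H2 Hcd; pose proof (sqdist_neq0 _ _ Hcd) as HN; unfold sqdist in HN.
  assert (Hn : ob_pt (psub d c)) by (apply ob_pt_psub; assumption).
  apply ob_pt_pscale; [|exact Hn].
  apply ob_div; [| apply ob_mul; [apply ob_two | apply ob_dot; exact Hn] | lra].
  pose proof (ob_dot _ _ Hc Hc); pose proof (ob_dot _ _ Hd Hd); ob_ring.
Qed.

Lemma ob_line_line_param a v b w t s :
  ob_pt a -> ob_pt v -> ob_pt b -> ob_pt w ->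
  padd a (pscale t v) = padd b (pscale s w) -> cross v w <> 0 -> Ob t.
Proof.
  intros Ha Hv Hb Hw E Hvw; rewrite (line_meet_param _ _ _ _ _ _ E Hvw).
  apply ob_div; [apply ob_cross; [apply ob_pt_psub|] | apply ob_cross | ]; assumption.
Qed.

Lemma ob_line_circle_param a v c R0 t :
  ob_pt a -> ob_pt v -> ob_pt c -> Ob R0 -> dot v v <> 0 ->
  sqdist c (padd a (pscale t v)) = R0 -> Ob t.
Proof.
  intros Ha Hv Hc HR Hvv Ht.
  assert (HA : Ob (dot v v)) by (apply ob_dot; assumption).
  assert (HB : Ob (2 * dot (psub a c) v)).
  { apply ob_mul; [apply ob_two | apply ob_dot; [apply ob_pt_psub |]; assumption]. }
  assert (HS : Ob (sqrt (2 * dot (psub a c) v * (2 * dot (psub a c) v)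
                         - 4 * dot v v * (sqdist c a - R0)))).
  { apply ob_sqrt_any; pose proof (ob_sqdist c a Hc Ha); ob_ring. }
  destruct (param_circle_roots _ _ _ _ _ Hvv Ht) as [-> | ->];
    apply ob_div; ob_ring; lra.
Qed.

(* What lines and non-degenerate rays look like around each of their points; the
   neighbourhood is what makes two parallel such curves meet infinitely often. *)
Definition ob_segment (k : curve) (z : point) : Prop :=
  exists a v t d, ob_pt a /\ ob_pt v /\ dot v v <> 0 /\ z = padd a (pscale t v) /\
    0 < d /\ forall e, Rabs e <= d -> on_curve k (padd z (pscale e v)).

Lemma ob_segment_intro k a v t d : ob_pt a -> ob_pt v -> dot v v <> 0 -> 0 < d ->
  (forall e, Rabs e <= d -> on_curve k (padd (padd a (pscale t v)) (pscale e v))) ->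
  ob_segment k (padd a (pscale t v)).
Proof. intros; exists a, v, t, d; intuition. Qed.

Definition ob_curve (k : curve) : Prop :=
  match k with
  | Line a b => ob_pt a /\ ob_pt b /\ a <> b
  | Circle c p => ob_pt c /\ ob_pt p
  | Ray o d => ob_pt o /\ ob_pt d
  end.

Lemma ob_curve_point_cases k z : ob_curve k -> on_curve k z ->
  ob_pt z \/ ob_segment k z \/ exists c p, k = Circle c p /\ ob_pt c /\ ob_pt p.
Proof.
  destruct k as [a b | c p | o d]; simpl; intros Hk Hz.
  - destruct Hk as [Ha [Hb Hab]], Hz as [t ->]; right; left.
    apply ob_segment_intro with 1; auto using ob_pt_psub; [exact (sqdist_neq0 a b Hab) | lra |].
    intros e _; exists (t + e); destruct a, b; unfold_pt; f_equal; ring.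
  - right; right; exists c, p; auto.
  - destruct Hk as [Ho Hd], Hz as [t [Ht ->]].
    destruct (Req_dec t 0) as [Ht0 | Ht0].
    { left; rewrite padd_pscale_0 by auto; exact Ho. }
    destruct (Req_dec (dot d d) 0) as [Hd0 | Hd0].
    { left; apply dot_self_eq0 in Hd0; rewrite padd_pscale_0 by auto; exact Ho. }
    right; left; apply ob_segment_intro with t; auto; [lra|].
    intros e He; exists (t + e); split.
    + revert He; split_Rabs; lra.
    + destruct o, d; unfold_pt; f_equal; ring.
Qed.

Lemma segment_meet_obtainable k1 k2 z :
  ob_segment k1 z -> ob_segment k2 z -> meet_finite k1 k2 -> ob_pt z.
Proof.
  intros [a [v [t [d [Ha [Hv [Hvv [Hz [Hd Hk1]]]]]]]]]
         [b [w [s [d' [Hb [Hw [Hww [Hz' [Hd' Hk2]]]]]]]]] Hfin.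
  destruct (Req_dec (cross v w) 0) as [Hpar | Hvw].
  - exfalso; set (mu := dot v w / dot w w).
    assert (Hvmu : v = pscale mu w) by (apply parallel_scale; assumption).
    assert (Hmu : 0 < Rabs mu).
    { apply Rabs_pos_lt; intro H0; apply Hvv; rewrite Hvmu, H0; destruct w; unfold_pt; ring. }
    revert Hfin;
    apply (not_meet_finite k1 k2 (fun e => padd z (pscale e v)) (Rmin d (d' / Rabs mu)));
      [apply Rmin_glb_lt; [| apply Rdiv_lt_0_compat]; assumption
      | intros e e' _ _; apply translate_inj; exact Hvv |].
    intros e [He0 He]; pose proof (Rmin_l d (d' / Rabs mu)); pose proof (Rmin_r d (d' / Rabs mu)).
    split; [apply Hk1; rewrite Rabs_right; lra|].
    replace (padd z (pscale e v)) with (padd z (pscale (e * mu) w))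
      by (rewrite Hvmu; destruct z, w; unfold_pt; f_equal; ring).
    apply Hk2; rewrite Rabs_mult, (Rabs_right e) by lra.
    apply Rmult_le_reg_r with (/ Rabs mu); [apply Rinv_0_lt_compat; exact Hmu|].
    field_simplify; lra.
  - rewrite Hz; apply ob_pt_padd; [exact Ha | apply ob_pt_pscale; [|exact Hv]].
    apply (ob_line_line_param a v b w t s); try assumption; congruence.
Qed.

Lemma segment_circle_obtainable k z c p :
  ob_segment k z -> ob_pt c -> ob_pt p -> on_curve (Circle c p) z -> ob_pt z.
Proof.
  intros [a [v [t [d [Ha [Hv [Hvv [-> _]]]]]]]] Hc Hp Hz; apply on_circle_sqdist in Hz.
  apply ob_pt_padd; [exact Ha | apply ob_pt_pscale; [|exact Hv]].
  apply (ob_line_circle_param a v c (sqdist c p)); auto using ob_sqdist.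
Qed.

Lemma circle_circle_obtainable c p c' p' z : ob_pt c -> ob_pt p -> ob_pt c' -> ob_pt p' ->
  on_curve (Circle c p) z -> on_curve (Circle c' p') z -> meet_finite (Circle c p) (Circle c' p') ->
  ob_pt z.
Proof.
  intros Hc Hp Hc' Hp' Hz Hz' Hfin; rewrite on_circle_sqdist in Hz, Hz'.
  destruct (point_eq_dec c c') as [<- | Hcc'].
  - set (R0 := sqdist c z) in *.
    destruct (Req_dec R0 0) as [HR | HR].
    { apply sqdist_eq0 in HR; rewrite HR; exact Hc. }
    exfalso; assert (HR0 : 0 < R0) by (pose proof (sqdist_ge0 c z) as Hge; fold R0 in Hge; lra).
    revert Hfin; apply (not_meet_finite _ _ (fun e => padd c (e, sqrt (R0 - e * e))) (sqrt R0));
      [apply sqrt_lt_R0; exact HR0 | intros e e' _ _ E; destruct c; unfold_pt; injection E; lra |].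
    intros e [He0 He]; rewrite !on_circle_sqdist, <- Hz, <- Hz'.
    assert (Hee : e * e <= R0).
    { rewrite <- (sqrt_sqrt R0) by lra; apply Rmult_le_compat; lra. }
    assert (Hs : sqrt (R0 - e * e) * sqrt (R0 - e * e) = R0 - e * e) by (apply sqrt_sqrt; lra).
    assert (Hg : sqdist c (padd c (e, sqrt (R0 - e * e))) = R0).
    { transitivity (e * e + sqrt (R0 - e * e) * sqrt (R0 - e * e)); [|lra].
      destruct c; unfold_pt; ring. }
    split; exact Hg.
  - destruct (radical_axis c c' _ _ z Hcc' Hz Hz') as [t ->].
    apply ob_pt_padd; [apply ob_pt_radical_base; auto using ob_sqdist|].
    apply ob_pt_pscale; [|apply ob_pt_perp, ob_pt_psub; assumption].
    apply (ob_line_circle_param (radical_base c c' (sqdist c p) (sqdist c' p'))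
             (perp (psub c' c)) c (sqdist c p)); auto using ob_sqdist.
    + apply ob_pt_radical_base; auto using ob_sqdist.
    + apply ob_pt_perp, ob_pt_psub; assumption.
    + pose proof (sqdist_neq0 _ _ Hcc'); destruct c, c'; unfold_pt; lra.
Qed.

Lemma meet_obtainable k1 k2 z : ob_curve k1 -> ob_curve k2 ->
  on_curve k1 z -> on_curve k2 z -> meet_finite k1 k2 -> ob_pt z.
Proof.
  intros Hk1 Hk2 Hz1 Hz2 Hfin.
  destruct (ob_curve_point_cases _ _ Hk1 Hz1) as [Hob | [Hs1 | [c [p [-> [Hc Hp]]]]]];
    [exact Hob | |];
  (destruct (ob_curve_point_cases _ _ Hk2 Hz2) as [Hob | [Hs2 | [c' [p' [-> [Hc' Hp']]]]]];
    [exact Hob | |]).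
  - exact (segment_meet_obtainable _ _ _ Hs1 Hs2 Hfin).
  - exact (segment_circle_obtainable _ _ _ _ Hs1 Hc' Hp' Hz2).
  - exact (segment_circle_obtainable _ _ _ _ Hs2 Hc Hp Hz1).
  - exact (circle_circle_obtainable _ _ _ _ _ Hc Hp Hc' Hp' Hz1 Hz2 Hfin).
Qed.

Lemma ob_curve_RA_ray o p q P Q :
  (forall y, Ob y -> Ob (sin (PI * y))) ->
  ob_pt o -> ob_pt p -> ob_pt q -> p <> o -> q <> o -> Ob P -> Ob Q -> Q <> 0 ->
  ob_curve (RA_ray o p q P Q).
Proof.
  intros Hsin Ho Hp Hq Hpo Hqo HP HQ HQ0; split; [exact Ho|].
  assert (Hx : Ob (P / Q / 2)) by (apply ob_div; [apply ob_div | apply ob_two | lra]; assumption).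
  apply ob_pt_padd; apply ob_pt_pscale; auto using ob_pt_unit_dir.
  - rewrite cos_sin; replace (PI / 2 + P / Q * (PI / 2)) with (PI * (P / Q / 2 + / 2))
      by (field; exact HQ0).
    apply Hsin, ob_add; [exact Hx | apply ob_inv; [apply ob_two | lra]].
  - replace (P / Q * (PI / 2)) with (PI * (P / Q / 2)) by (field; exact HQ0).
    apply Hsin; exact Hx.
Qed.

Lemma ob_pt_RRA_point o p q x a b :
  (forall y, Ob y -> Rabs y <= 1 -> Ob (asin y / PI)) ->
  ob_pt o -> ob_pt p -> ob_pt q -> ob_pt x -> ob_pt a -> ob_pt b -> p <> o -> q <> o ->
  inside_right_angle o p q x -> ob_pt (RRA_point (angle_in_right_angle o p q x) a b).
Proof.
  intros Hasin Ho Hp Hq Hx Ha Hb Hpo Hqo [HX _].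
  apply ob_pt_padd; [exact Ha | apply ob_pt_pscale; [|apply ob_pt_psub; assumption]].
  unfold angle_in_right_angle; rewrite atan_asin.
  set (u := dot (psub x o) (unit_dir o q) / dot (psub x o) (unit_dir o p)).
  assert (Hu : Ob u).
  { apply ob_div; [| | lra]; apply ob_dot; auto using ob_pt_psub, ob_pt_unit_dir. }
  replace (2 * asin (u / sqrt (1 + u²)) / PI) with (2 * (asin (u / sqrt (1 + u²)) / PI))
    by (unfold Rdiv; ring).
  apply ob_mul; [apply ob_two | apply Hasin].
  - apply ob_div; [exact Hu | apply ob_sqrt_any, ob_add; [apply ob_one | apply ob_mul; exact Hu] |].
    apply Rgt_not_eq, sqrt_lt_R0; pose proof (Rle_0_sqr u); lra.
  - rewrite <- sin_atan; apply Rabs_le, SIN_bound.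
Qed.

End Obtainable.

Definition tool_fun (m : tool) : R -> R :=
  match m with RA => fun x => sin (PI * x) | RRA => fun x => asin x / PI end.
Definition tool_dom (m : tool) : R -> Prop :=
  match m with RA => fun _ => True | RRA => fun x => Rabs x <= 1 end.

Scheme cpt_mut := Induction for cpt Sort Prop
  with ccurve_mut := Induction for ccurve Sort Prop.
Combined Scheme cpt_ccurve_mut from cpt_mut, ccurve_mut.

Lemma cpt_obtainable m :
  (forall z, cpt m z -> ob_pt (tool_fun m) (tool_dom m) z) /\
  (forall k, ccurve m k -> ob_curve (tool_fun m) (tool_dom m) k).
Proof.
  apply cpt_ccurve_mut.
  - split; apply ob_zero.
  - split; [apply ob_one | apply ob_zero].
  - intros k1 k2 z _ Hk1 _ Hk2 Hz1 Hz2 Hfin; exact (meet_obtainable _ _ _ _ _ Hk1 Hk2 Hz1 Hz2 Hfin).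
  - intros o p q x a b -> _ Ho _ Hp _ Hq _ Hx _ Ha _ Hb [Hpo [Hqo _]] Hin.
    apply ob_pt_RRA_point; auto.
    intros y Hy Hy1; apply (ob_fun _ (tool_dom RRA) y Hy Hy1).
  - intros a b _ Ha _ Hb Hab; simpl; auto.
  - intros c p _ Hc _ Hp; simpl; auto.
  - intros o p q a b c d -> _ Ho _ Hp _ Hq _ Ha _ Hb _ Hc _ Hd [Hpo [Hqo _]] Hcd _.
    apply ob_curve_RA_ray; auto using ob_dist; [|lra].
    intros y Hy; apply (ob_fun _ (tool_dom RA) y Hy I).
Qed.

Lemma meet_finite_circle_param k c p a v : dot v v <> 0 ->
  (forall w, on_curve k w -> on_curve (Circle c p) w -> exists t, w = padd a (pscale t v)) ->
  meet_finite k (Circle c p).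
Proof.
  intros Hv Hk.
  set (B := 2 * dot (psub a c) v).
  set (D := B * B - 4 * dot v v * (sqdist c a - sqdist c p)).
  exists (padd a (pscale ((sqrt D - B) / (2 * dot v v)) v)
          :: padd a (pscale ((- sqrt D - B) / (2 * dot v v)) v) :: nil).
  intros w Hw Hwc; destruct (Hk w Hw Hwc) as [t ->]; apply on_circle_sqdist in Hwc.
  destruct (param_circle_roots _ _ _ _ _ Hv Hwc) as [-> | ->]; simpl; auto.
Qed.

Ltac pt_neq := let H := fresh in intro H; injection H; intros; lra.
Ltac on_circle := apply on_circle_sqdist; unfold_pt.
Ltac on_line t := exists t; unfold_pt; f_equal.

Lemma sqrt3_sq : sqrt 3 * sqrt 3 = 3.
Proof. apply sqrt_sqrt; lra. Qed.

Section Constructions.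
Variable m : tool.
Notation C := (cpt m).

Definition cnum (x : R) : Prop := C (x, 0).

Lemma cpt_line_line a b c d z : C a -> C b -> C c -> C d -> a <> b -> c <> d ->
  cross (psub b a) (psub d c) <> 0 ->
  on_curve (Line a b) z -> on_curve (Line c d) z -> C z.
Proof.
  intros Ha Hb Hc Hd Hab Hcd Hx Hz1 Hz2.
  apply (cpt_inter m (Line a b) (Line c d) z); try (apply cc_line; assumption); try assumption.
  exists (z :: nil); intros w [t ->] [s Hs]; left.
  destruct Hz1 as [t' ->], Hz2 as [s' Hs'].
  rewrite (line_meet_param _ _ _ _ _ _ Hs Hx), (line_meet_param _ _ _ _ _ _ Hs' Hx).
  reflexivity.
Qed.

Lemma cpt_curve_circle k c p z a v : ccurve m k -> C c -> C p -> dot v v <> 0 ->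
  (forall w, on_curve k w -> exists t, w = padd a (pscale t v)) ->
  on_curve k z -> on_curve (Circle c p) z -> C z.
Proof.
  intros Hk Hc Hp Hv Hpar Hz1 Hz2.
  apply (cpt_inter m k (Circle c p) z); auto using cc_circle.
  apply meet_finite_circle_param with a v; auto.
Qed.

Lemma cpt_line_circle a b c p z : C a -> C b -> C c -> C p -> a <> b ->
  on_curve (Line a b) z -> on_curve (Circle c p) z -> C z.
Proof.
  intros Ha Hb Hc Hp Hab; apply cpt_curve_circle with a (psub b a); auto using cc_line.
  exact (sqdist_neq0 a b Hab).
Qed.

Lemma cpt_circle_circle c p c' p' z : C c -> C p -> C c' -> C p' -> c <> c' ->
  on_curve (Circle c p) z -> on_curve (Circle c' p') z -> C z.
Proof.
  intros Hc Hp Hc' Hp' Hcc' Hz1 Hz2.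
  apply (cpt_inter m (Circle c p) (Circle c' p') z); auto using cc_circle.
  apply meet_finite_circle_param
    with (radical_base c c' (sqdist c p) (sqdist c' p')) (perp (psub c' c)).
  - pose proof (sqdist_neq0 _ _ Hcc'); destruct c, c'; unfold_pt; lra.
  - intros w Hw1 Hw2; apply on_circle_sqdist in Hw1, Hw2; apply radical_axis; assumption.
Qed.

Lemma cnum_0 : cnum 0. Proof. apply cpt_O. Qed.
Lemma cnum_1 : cnum 1. Proof. apply cpt_I. Qed.

Lemma cnum_opp x : cnum x -> cnum (- x).
Proof.
  intro Hx; apply (cpt_line_circle (0, 0) (1, 0) (0, 0) (x, 0));
    auto using cpt_O, cpt_I; [pt_neq | on_line (- x); ring | on_circle; ring].
Qed.

Lemma cnum_double x : cnum x -> cnum (2 * x).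
Proof.
  intro Hx; apply (cpt_line_circle (0, 0) (1, 0) (x, 0) (0, 0));
    auto using cpt_O, cpt_I; [pt_neq | on_line (2 * x); ring | on_circle; ring].
Qed.

(* The apexes of the two equilateral triangles on [x, y] lie above and below the midpoint. *)
Lemma cnum_midpoint x y : cnum x -> cnum y -> x <> y -> cnum ((x + y) / 2).
Proof.
  intros Hx Hy Hxy; pose proof Rlt_sqrt3_0 as Hs3.
  set (h := sqrt 3 / 2 * (y - x)).
  assert (Hh : h <> 0) by (unfold h; intro H0; apply Rmult_integral in H0; destruct H0; lra).
  assert (Hapex : forall s, s * s = 1 -> C ((x + y) / 2, s * h)).
  { intros s Hs.
    assert (Hsh : (s * h) * (s * h) = 3 / 4 * ((y - x) * (y - x))).
    { unfold h; transitivity (s * s * (sqrt 3 * sqrt 3) * ((y - x) * (y - x)) / 4); [field|].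
      rewrite Hs, sqrt3_sq; field. }
    apply (cpt_circle_circle (x, 0) (y, 0) (y, 0) (x, 0)); auto; [pt_neq | |];
      on_circle; rewrite !Rminus_0_r, Hsh; field. }
  apply (cpt_line_line _ _ (0, 0) (1, 0) _ (Hapex 1 ltac:(ring)) (Hapex (-1) ltac:(ring))
           (cpt_O m) (cpt_I m)); [pt_neq | pt_neq | unfold_pt; lra | |].
  - on_line (/ 2); field.
  - on_line ((x + y) / 2); field.
Qed.

Lemma cnum_add x y : cnum x -> cnum y -> cnum (x + y).
Proof.
  intros Hx Hy; replace (x + y) with (2 * ((x + y) / 2)) by field; apply cnum_double.
  destruct (Req_dec x y) as [<- | Hxy].
  - replace ((x + x) / 2) with x by field; exact Hx.
  - apply cnum_midpoint; assumption.
Qed.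

Lemma cnum_sub x y : cnum x -> cnum y -> cnum (x - y).
Proof. intros; apply cnum_add; [|apply cnum_opp]; assumption. Qed.

Lemma cpt_vertical x : cnum x -> C (x, sqrt 3) /\ C (x, - sqrt 3).
Proof.
  intro Hx; pose proof sqrt3_sq.
  assert (Hl : cnum (x - 1)) by (apply cnum_sub; auto using cnum_1).
  assert (Hr : cnum (x + 1)) by (apply cnum_add; auto using cnum_1).
  split; apply (cpt_circle_circle (x - 1, 0) (x + 1, 0) (x + 1, 0) (x - 1, 0));
    auto; try pt_neq; on_circle; lra.
Qed.

Lemma cpt_pair x y : cnum x -> cnum y -> C (x, y).
Proof.
  intros Hx Hy; pose proof Rlt_sqrt3_0; destruct (cpt_vertical x Hx) as [Hup Hdown].
  apply (cpt_line_circle _ _ (x, 0) (x + y, 0) _ Hup Hdown Hx (cnum_add x y Hx Hy));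
    [pt_neq | on_line ((sqrt 3 - y) / (2 * sqrt 3)); field; lra | on_circle; ring].
Qed.

Lemma cnum_coords a b : C (a, b) -> cnum a /\ cnum b.
Proof.
  intro H; destruct (Req_dec b 0) as [-> | Hb]; [split; auto using cnum_0|].
  assert (Href : C (a, - b)).
  { apply (cpt_circle_circle (0, 0) (a, b) (1, 0) (a, b));
      auto using cpt_O, cpt_I; [pt_neq | on_circle; ring | on_circle; ring]. }
  assert (Ha : cnum a).
  { apply (cpt_line_line _ _ (0, 0) (1, 0) _ H Href (cpt_O m) (cpt_I m));
      [pt_neq | pt_neq | unfold_pt; lra | on_line (/ 2); field | on_line a; ring]. }
  assert (Hab : cnum (a + b)).
  { apply (cpt_line_circle (0, 0) (1, 0) (a, 0) (a, b));
      auto using cpt_O, cpt_I; [pt_neq | on_line (a + b); ring | on_circle; ring]. }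
  split; [exact Ha|]; replace b with ((a + b) - a) by ring; apply cnum_sub; assumption.
Qed.

(* The line through the origin and (1, y) meets the vertical line at x in (x, x y). *)
Lemma cnum_mul x y : cnum x -> cnum y -> cnum (x * y).
Proof.
  intros Hx Hy; pose proof Rlt_sqrt3_0; destruct (cpt_vertical x Hx) as [Hup Hdown].
  assert (Hp : C (x, x * y)).
  { apply (cpt_line_line _ _ _ _ _ (cpt_O m) (cpt_pair 1 y cnum_1 Hy) Hup Hdown);
      [pt_neq | pt_neq | unfold_pt; lra | on_line x; ring
      | on_line ((sqrt 3 - x * y) / (2 * sqrt 3)); field; lra]. }
  apply (cnum_coords _ _ Hp).
Qed.

Lemma cnum_div x y : cnum x -> cnum y -> y <> 0 -> cnum (x / y).
Proof.
  intros Hx Hy Hy0; pose proof Rlt_sqrt3_0; destruct (cpt_vertical 1 cnum_1) as [Hup Hdown].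
  assert (Hp : C (1, x / y)).
  { apply (cpt_line_line _ _ _ _ _ (cpt_O m) (cpt_pair y x Hy Hx) Hup Hdown);
      [pt_neq | pt_neq | unfold_pt; nra | on_line (/ y); field; exact Hy0
      | on_line ((sqrt 3 - x / y) / (2 * sqrt 3)); field; lra]. }
  apply (cnum_coords _ _ Hp).
Qed.

(* The circle on the diameter [-1, x] meets the vertical axis at height sqrt x. *)
Lemma cnum_sqrt x : cnum x -> 0 < x -> cnum (sqrt x).
Proof.
  intros Hx Hx0; pose proof (sqrt_sqrt x (Rlt_le _ _ Hx0)) as Hsq.
  assert (Hc : cnum ((x - 1) / 2)).
  { apply cnum_div; [apply cnum_sub; auto using cnum_1 | apply cnum_add; apply cnum_1 | lra]. }
  assert (Hp : C (0, sqrt x)).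
  { apply (cpt_line_circle (0, 0) (0, 1) ((x - 1) / 2, 0) (x, 0));
      auto using cpt_O, cpt_pair, cnum_0, cnum_1; [pt_neq | on_line (sqrt x); ring | on_circle].
    rewrite !Rminus_0_r, Hsq; field. }
  apply (cnum_coords _ _ Hp).
Qed.

Lemma cnum_INR n : cnum (INR n).
Proof.
  induction n as [|n IH]; [apply cnum_0|].
  rewrite S_INR; apply cnum_add; [exact IH | apply cnum_1].
Qed.

Lemma cnum_IZR z : cnum (IZR z).
Proof.
  destruct z as [|p|p]; [apply cnum_0 | | rewrite IZR_NEG; apply cnum_opp];
    rewrite <- positive_nat_Z, <- INR_IZR_INZ; apply cnum_INR.
Qed.

End Constructions.

Lemma unit_dir_e1 : unit_dir (0, 0) (1, 0) = (1, 0).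
Proof.
  unfold unit_dir, norm; unfold_pt; replace ((1 - 0) * (1 - 0) + (0 - 0) * (0 - 0)) with 1 by ring.
  rewrite sqrt_1; f_equal; field.
Qed.

Lemma unit_dir_e2 : unit_dir (0, 0) (0, 1) = (0, 1).
Proof.
  unfold unit_dir, norm; unfold_pt; replace ((0 - 0) * (0 - 0) + (1 - 0) * (1 - 0)) with 1 by ring.
  rewrite sqrt_1; f_equal; field.
Qed.

Lemma right_angle_axes : right_angle (0, 0) (1, 0) (0, 1).
Proof. repeat split; try pt_neq; unfold_pt; ring. Qed.

Lemma cpt_e2 m : cpt m (0, 1).
Proof. apply cpt_pair; [apply cnum_0 | apply cnum_1]. Qed.

(* The RA ray at angle t pi/2 between the axes meets the unit circle in (cos, sin). *)
Lemma cnum_sin_half_pi t : cnum RA t -> 0 <= t <= 1 -> cnum RA (sin (t * (PI / 2))).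
Proof.
  intros Ht Ht01; set (phi := t * (PI / 2)).
  assert (Hdt : dist (0, 0) (t, 0) = t) by (rewrite dist_axis; apply Rabs_right; lra).
  assert (Hd1 : dist (0, 0) (1, 0) = 1) by (rewrite dist_axis; apply Rabs_R1).
  assert (Hray : ccurve RA (Ray (0, 0) (cos phi, sin phi))).
  { replace (Ray (0, 0) (cos phi, sin phi)) with (RA_ray (0, 0) (1, 0) (0, 1)
               (dist (0, 0) (t, 0)) (dist (0, 0) (1, 0))).
    - apply cc_RA; auto using cpt_O, cpt_I, cpt_e2, right_angle_axes; lra.
    - unfold RA_ray; rewrite Hdt, Hd1, unit_dir_e1, unit_dir_e2.
      unfold phi; unfold_pt; replace (t / 1) with t by field; f_equal; f_equal; ring. }
  assert (Hp : cpt RA (cos phi, sin phi)).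
  { pose proof (sin2_cos2 phi) as Hsc; unfold Rsqr in Hsc.
    apply (cpt_curve_circle RA _ (0, 0) (1, 0) _ (0, 0) (cos phi, sin phi) Hray
             (cpt_O RA) (cpt_I RA));
      [unfold_pt; lra | intros w [s [_ ->]]; exists s; reflexivity | |].
    - exists 1; split; [lra | unfold_pt; f_equal; ring].
    - on_circle; lra. }
  apply (cnum_coords _ _ _ Hp).
Qed.

Lemma cnum_sin_pi_unit u : cnum RA u -> 0 <= u <= 1 -> cnum RA (sin (PI * u)).
Proof.
  intros Hu Hu01; destruct (Rle_lt_dec u (1 / 2)).
  - replace (PI * u) with ((2 * u) * (PI / 2)) by field.
    apply cnum_sin_half_pi; [apply cnum_double; exact Hu | lra].
  - rewrite <- sin_PI_x; replace (PI - PI * u) with ((2 - 2 * u) * (PI / 2)) by field.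
    apply cnum_sin_half_pi; [|lra].
    apply cnum_sub; [apply (cnum_IZR RA 2) | apply cnum_double; exact Hu].
Qed.

Lemma sin_period_Z x k : sin (x + 2 * IZR k * PI) = sin x.
Proof.
  destruct (Z.le_ge_cases 0 k) as [Hk | Hk].
  - rewrite <- (Z2Nat.id k Hk), <- INR_IZR_INZ; apply sin_period.
  - rewrite <- (sin_period _ (Z.to_nat (- k))), INR_IZR_INZ, Z2Nat.id, opp_IZR by lia.
    f_equal; ring.
Qed.

Lemma cnum_sin_pi x : cnum RA x -> cnum RA (sin (PI * x)).
Proof.
  intro Hx; destruct (archimed (x / 2)) as [Hup1 Hup2].
  set (k := (up (x / 2) - 1)%Z).
  assert (Hk : IZR k = IZR (up (x / 2)) - 1) by (unfold k; rewrite minus_IZR; reflexivity).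
  set (u := x - 2 * IZR k).
  assert (Hu : cnum RA u) by (apply cnum_sub; [exact Hx | apply cnum_double, cnum_IZR]).
  assert (Hu02 : 0 <= u < 2) by (unfold u; lra).
  replace (PI * x) with (PI * u + 2 * IZR k * PI) by (unfold u; ring).
  rewrite sin_period_Z; destruct (Rle_lt_dec u 1).
  - apply cnum_sin_pi_unit; [exact Hu | lra].
  - replace (PI * u) with (PI * (u - 1) + PI) by ring; rewrite neg_sin.
    apply cnum_opp, cnum_sin_pi_unit; [apply cnum_sub; [exact Hu | apply cnum_1] | lra].
Qed.

(* The RRA tool applied to the point (c, s) inside the right angle of the axes,
   and to the unit segment. *)
Lemma cnum_atan_ratio c s : cnum RRA c -> cnum RRA s -> 0 < c -> 0 < s ->
  cnum RRA (2 * atan (s / c) / PI).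
Proof.
  intros Hc Hs Hc0 Hs0.
  assert (Hin : inside_right_angle (0, 0) (1, 0) (0, 1) (c, s)).
  { unfold inside_right_angle; rewrite unit_dir_e1, unit_dir_e2; unfold_pt; split; lra. }
  pose proof (cpt_RRA RRA (0, 0) (1, 0) (0, 1) (c, s) (0, 0) (1, 0) eq_refl
                (cpt_O RRA) (cpt_I RRA) (cpt_e2 RRA) (cpt_pair RRA c s Hc Hs)
                (cpt_O RRA) (cpt_I RRA) right_angle_axes Hin) as H.
  unfold RRA_point, angle_in_right_angle in H; rewrite unit_dir_e1, unit_dir_e2 in H; unfold_pt.
  replace (((c - 0) * 0 + (s - 0) * 1) / ((c - 0) * 1 + (s - 0) * 0)) with (s / c) in H
    by (field; lra).
  apply (eq_ind _ (cpt RRA) H); f_equal; ring.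
Qed.

Lemma cnum_asin_pi_unit x : cnum RRA x -> 0 <= x <= 1 -> cnum RRA (asin x / PI).
Proof.
  intros Hx Hx01; pose proof PI_RGT_0 as Hpi.
  destruct (Req_dec x 0) as [-> | Hx0].
  { rewrite asin_0; replace (0 / PI) with 0 by (field; lra); apply cnum_0. }
  destruct (Req_dec x 1) as [-> | Hx1].
  { rewrite asin_1; replace (PI / 2 / PI) with (1 / 2) by (field; lra).
    apply cnum_div; [apply cnum_1 | apply (cnum_IZR RRA 2) | lra]. }
  assert (Hc : 0 < 1 - x²) by (unfold Rsqr; nra).
  assert (HcK : cnum RRA (sqrt (1 - x²))).
  { apply cnum_sqrt; [apply cnum_sub; [apply cnum_1 | apply cnum_mul; exact Hx] | exact Hc]. }
  pose proof (cnum_atan_ratio _ _ HcK Hx (sqrt_lt_R0 _ Hc) ltac:(lra)) as H.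
  rewrite <- asin_atan in H by lra.
  replace (asin x / PI) with (2 * asin x / PI / 2) by (field; lra).
  apply cnum_div; [exact H | apply (cnum_IZR RRA 2) | lra].
Qed.

Lemma cnum_asin_pi x : cnum RRA x -> Rabs x <= 1 -> cnum RRA (asin x / PI).
Proof.
  intros Hx Hx1; destruct (Rle_lt_dec 0 x).
  - apply cnum_asin_pi_unit; [exact Hx | revert Hx1; split_Rabs; lra].
  - replace x with (- - x) by ring; rewrite asin_opp.
    replace (- asin (- x) / PI) with (- (asin (- x) / PI)) by (unfold Rdiv; ring).
    apply cnum_opp, cnum_asin_pi_unit; [apply cnum_opp; exact Hx | revert Hx1; split_Rabs; lra].
Qed.

Lemma constructible_iff_obtainable m :
  (forall x, cnum m x -> tool_dom m x -> cnum m (tool_fun m x)) ->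
  forall r, constructible m r <-> obtainable (tool_fun m) (tool_dom m) r.
Proof.
  intros Hf r; split.
  - intros [a [b [Ha [Hb Hr]]]]; destruct (cpt_obtainable m) as [Hpt _].
    pose proof (ob_dist _ _ a b (Hpt a Ha) (Hpt b Hb)) as Hd; rewrite <- Hr in Hd.
    unfold Rabs in Hd; destruct (Rcase_abs r); [|exact Hd].
    replace r with (- - r) by ring; apply ob_opp; exact Hd.
  - intro Hr; exists (0, 0), (r, 0); split; [apply cpt_O|]; split; [|symmetry; apply dist_axis].
    change (cnum m r); induction Hr;
      auto using cnum_1, cnum_add, cnum_sub, cnum_mul, cnum_div, cnum_sqrt.
Qed.

Theorem theorem7p2 :
  (forall r : R, RA_constructible r <-> RA_obtainable r) /\
  (forall r : R, RRA_constructible r <-> RRA_obtainable r).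
Proof.
  split; apply constructible_iff_obtainable.
  - intros x Hx _; apply cnum_sin_pi; exact Hx.
  - exact cnum_asin_pi.
Qed.
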